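(* Let $\mathbf{w}$ be a finite set of words over $\Sigma$, $K=\{1,\dots,k\}$, and $\mathsf{A}=\langle \Sigma, K, S, S_0, \Delta, S_F\rangle$ an NAA with underlying NFA $\mathcal{A}$. For any $w\in\mathbf{w}$, any $m\in\{1,\dots,k\}$, any $i\in\{1,2,\dots,|w|-\ell_m\}$, and any $((w_1,i^1,j^1),\dots,(w_k,i^k,j^k))\in\mathcal{M}(\mathsf{A},\mathbf{w})$: if $\ell_m>0$, $w_{i+\ell_m-1}\notin \mathrm{Last}_m$, and $w_m=w$, then $i^m<i$ or $i^m\ge i+\Delta^m_{\mathrm{QS}}(w_{i+\ell_m})$.
   Context: An NAA is a tuple $\mathsf{A}=\langle \Sigma, K, S, S_0, \Delta, S_F\rangle$ with finite alphabet $\Sigma$, directions $K=\{1,\dots,k\}$, finite states $S$, initial states $S_0\subseteq S$, accepting states $S_F\subseteq S$ and transitions $\Delta\subseteq S\times\Sigma\times K\times S$. Its underlying NFA $\mathcal{A}$ is the NFA over alphabet $\Sigma\times K$ with the same states, initial/accepting states and transitions; $\mathcal{L}(\mathcal{A})$ is its language. For $\tilde w\in(\Sigma\times K)^*$ and $x\in K$, $\pi_x(\tilde w)\in\Sigma^*$ deletes letters $(a,x')$ with $x'\ne x$ and replaces each $(a,x)$ by $a$; $\pi_x(L)=\{\pi_x(\tilde w)\mid \tilde w\in L\}$. $\mathsf{A}$ accepts $(w_1,\dots,w_k)$ if some $\tilde w\in\mathcal{L}(\mathcal{A})$ has $\pi_x(\tilde w)=w_x$ for all $x$; $\mathfrak{L}(\mathsf{A})$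 is the set of accepted tuples. For $w=\sigma_1\cdots\sigma_n$, $w_i=\sigma_i$ is its $i$-th letter and $w[i..j]=\sigma_i\cdots\sigma_j$. The match set is $\mathcal{M}(\mathsf{A},\mathbf{w})=\{((w_1,i^1,j^1),\dots,(w_k,i^k,j^k))\in(\mathbf{w}\times\mathbb{N}\times\mathbb{N})^k\mid (w_1[i^1..j^1],\dots,w_k[i^k..j^k])\in\mathfrak{L}(\mathsf{A})\}$. QS-style skip values (computed for $\mathcal{A}$): $\ell=\min_{\tilde w\in\mathcal{L}(\mathcal{A})}|\tilde w|$; for $m\in K$, $\ell_m=\min_{\tilde w\in\mathcal{L}(\mathcal{A})}|\pi_m(\tilde w[1..\ell])|$; $\mathrm{Last}_m\subseteq\Sigma$ is the set of $\ell_m$-th letters of words in $\pi_m(\mathcal{L}(\mathcal{A}))$; for $\sigma\in\Sigma$, $\Delta^m_{\mathrm{QS}}(\sigma)=\min\{\ell_m+1,\ \min\{i\in\{1,\dots,\ell_m\}\mid \exists \tilde w\in\mathcal{L}(\mathcal{A}).\ \text{the }(\ell_m+1-i)\text{-th letter of }\pi_m(\tilde w)\text{ is }\sigma\}\}$. *)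

From Stdlib Require Import ClassicalEpsilon.
From mathcomp Require Import all_boot.
Set Implicit Arguments. Unset Strict Implicit. Unset Printing Implicit Defensive.

(* Conventions: the direction set K = {1,...,k} is represented by 'I_k
   (direction x of the paper is the ordinal x-1).  Letters of words and
   substrings use the paper's 1-based positions. *)

(* Classical helpers: boolean reflection of a Prop and the minimum of a
   nonempty set of naturals (0 by convention if the set is empty). *)
Definition decP (P : Prop) : bool :=
  if excluded_middle_informative P then true else false.

Lemma decPP (P : Prop) : reflect P (decP P).
Proof. by rewrite /decP; case: excluded_middle_informative => h; constructor. Qed.

Lemma ex_decP (P : nat -> Prop) : (exists n, P n) -> exists n, decP (P n).
Proof. by case=> n Pn; exists n; apply/decPP. Qed.

Definition minP (P : nat -> Prop) : nat :=
  match excluded_middle_informative (exists n, P n) with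
  | left h => ex_minn (ex_decP h)
  | right _ => 0
  end.

Record NAA (Sigma : finType) (k : nat) (S : finType) := {
  naa_init  : pred S;
  naa_final : pred S;
  naa_trans : S -> Sigma -> 'I_k -> S -> bool
}.

Section Defs.
Variables (Sigma : finType) (k : nat) (S : finType) (A : NAA Sigma k S).

Fixpoint acc_from (s : S) (u : seq (Sigma * 'I_k)) : bool :=
  match u with
  | [::] => naa_final A s
  | (a, x) :: u' => [exists s' : S, naa_trans A s a x s' && acc_from s' u']
  end.

Definition lang (u : seq (Sigma * 'I_k)) : bool :=
  [exists s : S, naa_init A s && acc_from s u].

Definition proj (x : 'I_k) (u : seq (Sigma * 'I_k)) : seq Sigma :=
  [seq p.1 | p <- u & p.2 == x].

Definition naa_accepts (ws : 'I_k -> seq Sigma) : Prop :=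
  exists u, lang u /\ forall x, proj x u = ws x.

(* w[i..j] (1-based, inclusive; w[i..i-1] is the empty word) *)
Definition substr (w : seq Sigma) (i j : nat) : seq Sigma :=
  take (j.+1 - i) (drop i.-1 w).

(* ((w_1,i^1,j^1),...,(w_k,i^k,j^k)) is in the match set M(A, W);
   indices are required to denote a (possibly empty) factor of w_x. *)
Definition in_matches (W : seq (seq Sigma)) (ws : 'I_k -> seq Sigma)
    (ii jj : 'I_k -> nat) : Prop :=
  (forall x, ws x \in W) /\
  (forall x, 1 <= ii x /\ ii x <= (jj x).+1 /\ jj x <= size (ws x)) /\
  naa_accepts (fun x => substr (ws x) (ii x) (jj x)).

Definition pos_is (v : seq Sigma) (n : nat) (a : Sigma) : Prop :=
  0 < n /\ onth v n.-1 = Some a.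

(* w_i, 1-based (the default x0 is irrelevant for in-range positions) *)
Definition letter (x0 : Sigma) (w : seq Sigma) (i : nat) : Sigma :=
  nth x0 w i.-1.

Definition ell : nat := minP (fun n => exists u, lang u /\ size u = n).

Definition ell_m (m : 'I_k) : nat :=
  minP (fun n => exists u, lang u /\ size (proj m (take ell u)) = n).

Definition Last (m : 'I_k) (a : Sigma) : Prop :=
  exists u, lang u /\ pos_is (proj m u) (ell_m m) a.

Definition DeltaQS (m : 'I_k) (a : Sigma) : nat :=
  minP (fun d => d = (ell_m m).+1 \/
                 (1 <= d <= ell_m m /\
                  exists u, lang u /\ pos_is (proj m u) ((ell_m m).+1 - d) a)).

End Defs.

(* Every accepted word has at least ell_m letters in direction m, so a match
   whose m-th component starts at position p puts w_p, ..., w_(p + ell_m - 1)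
   at the first ell_m positions of the m-th projection of an accepted word.
   A start p = i would make w_(i + ell_m - 1) an ell_m-th letter, i.e. a
   member of Last_m; a start i < p <= i + ell_m makes w_(i + ell_m) the
   (ell_m + 1 - (p - i))-th letter, so by minimality
   Delta^m_QS(w_(i + ell_m)) <= p - i.  As Delta^m_QS <= ell_m + 1, this rules
   out every start i <= p < i + Delta^m_QS(w_(i + ell_m)). *)

From Stdlib Require Import ClassicalEpsilon.
From mathcomp Require Import all_boot.
From mathcomp Require Import zify.

Set Implicit Arguments.
Unset Strict Implicit.
Unset Printing Implicit Defensive.

Lemma minP_le (P : nat -> Prop) n : P n -> minP P <= n.
Proof.
move=> Pn; rewrite /minP; case: excluded_middle_informative => [h|[]]; last by exists n.
by case: ex_minnP => q _; apply; apply/decPP.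
Qed.

Lemma onth_nth_lt {T : Type} (x0 : T) (s : seq T) n :
  n < size s -> onth s n = Some (nth x0 s n).
Proof. by move=> lt_n_s; rewrite onthE (nth_map x0). Qed.

Section Substrings.
Variables (Sigma : finType) (x0 : Sigma) (w : seq Sigma) (p j : nat).
Hypotheses (p_gt0 : 0 < p) (p_le_j1 : p <= j.+1) (j_le_w : j <= size w).

Lemma size_substr : size (substr w p j) = j.+1 - p.
Proof. by rewrite /substr size_take size_drop; case: ifP; lia. Qed.

Lemma pos_is_substr q : 0 < q <= j.+1 - p ->
  pos_is (substr w p j) q (letter x0 w (p + q - 1)).
Proof.
move=> /andP[q_gt0 q_le]; split => //.
rewrite (onth_nth_lt x0) ?size_substr; last by lia.
by rewrite /substr /letter nth_take ?nth_drop; [congr (Some (nth _ _ _)); lia | lia].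
Qed.

End Substrings.

Section MatchStart.
Variables (Sigma : finType) (k : nat) (S : finType) (A : NAA Sigma k S).
Variables (m : 'I_k) (x0 : Sigma).

Lemma ell_m_le_proj u : lang A u -> ell_m A m <= size (proj m u).
Proof.
move=> Lu; apply: (@leq_trans (size (proj m (take (ell A) u)))).
  by apply: minP_le; exists u.
rewrite -{2}(cat_take_drop (ell A) u) /proj filter_cat map_cat size_cat.
exact: leq_addr.
Qed.

Lemma DeltaQS_le_succ a : DeltaQS A m a <= (ell_m A m).+1.
Proof. by apply: minP_le; left. Qed.

Variables (u : seq (Sigma * 'I_k)) (w : seq Sigma) (p j : nat).
Hypotheses (Lu : lang A u) (proj_u : proj m u = substr w p j).
Hypotheses (p_gt0 : 0 < p) (p_le_j1 : p <= j.+1) (j_le_w : j <= size w).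

Lemma pos_is_match_start q : 0 < q <= ell_m A m ->
  pos_is (proj m u) q (letter x0 w (p + q - 1)).
Proof.
move=> /andP[q_gt0 q_le]; rewrite proj_u; apply: pos_is_substr => //.
have := ell_m_le_proj Lu; rewrite proj_u size_substr //; lia.
Qed.

Lemma Last_match_start : 0 < ell_m A m ->
  Last A m (letter x0 w (p + ell_m A m - 1)).
Proof. by move=> ell_gt0; exists u; split => //; apply: pos_is_match_start; lia. Qed.

Lemma DeltaQS_le_match_shift i : i < p <= i + ell_m A m ->
  DeltaQS A m (letter x0 w (i + ell_m A m)) <= p - i.
Proof.
move=> /andP[lt_i_p p_le]; apply: minP_le; right; split; first by lia.
exists u; split => //.
have -> : i + ell_m A m = p + ((ell_m A m).+1 - (p - i)) - 1 by lia.
by apply: pos_is_match_start; lia.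
Qed.

End MatchStart.

Theorem theorem2 (Sigma : finType) (k : nat) (S : finType) (A : NAA Sigma k S)
    (W : seq (seq Sigma)) (w : seq Sigma) (m : 'I_k) (i : nat)
    (ws : 'I_k -> seq Sigma) (ii jj : 'I_k -> nat) (x0 : Sigma) :
  w \in W ->
  1 <= i -> i <= size w - ell_m A m ->
  in_matches A W ws ii jj ->
  0 < ell_m A m ->
  ~ Last A m (letter x0 w (i + ell_m A m - 1)) ->
  ws m = w ->
  ii m < i \/ i + DeltaQS A m (letter x0 w (i + ell_m A m)) <= ii m.
Proof.
move=> _ _ _ [_ [bounds [u [Lu proj_u]]]] ell_gt0 notLast ws_m.
have [p_gt0 [p_le_j1 j_le_w]] := bounds m.
have {}proj_u : proj m u = substr w (ii m) (jj m) by rewrite proj_u ws_m.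
rewrite ws_m in j_le_w.
case: (ltnP (ii m) i) => [|le_i_p]; [by left | right].
have [eq_p_i|ne_p_i] := eqVneq (ii m) i.
  by case: notLast; rewrite -eq_p_i; apply: (Last_match_start x0 Lu proj_u).
rewrite leqNgt; apply/negP => lt_p_Delta.
have := DeltaQS_le_succ A m (letter x0 w (i + ell_m A m)).
have := DeltaQS_le_match_shift x0 Lu proj_u p_gt0 p_le_j1 j_le_w (i := i).
lia.
Qed.
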